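(* Let $(X_1,x_1)$ and $(X_2,x_2)$ be pointed diffeological spaces. Then there is a natural isomorphism of vector spaces $T_{(x_1,x_2)}(X_1\times X_2)\cong T_{x_1}(X_1)\times T_{x_2}(X_2)$.
   Context: A diffeological space is a set $X$ together with, for every open subset $U$ of every $\mathbb{R}^n$, a set of functions $U\to X$ called plots, such that constant maps are plots, the composite of a plot with a smooth map between open subsets of Euclidean spaces is a plot, and a function which is locally a plot is a plot; smooth maps send plots to plots. $X_1\times X_2$ carries the product diffeology, whose plots are the maps whose components are plots. The internal tangent space $T_x(X)$ is the colimit in the category of real vector spaces of the functor on the category whose objects are plots $p:U\to X$ with $U$ a connected open neighbourhood of $0$ in some $\mathbb{R}^n$ and $p(0)=x$, and whose morphisms $p\to q$ (for $q:V\to X$) are smooth maps $f:U\to V$ with $f(0)=0$ and $q\circ f=p$, sending $p$ to $T_0(U)$ and $f$ to $f_*:T_0(U)\to T_0(V)$. Smooth pointed maps induce linear maps between internal tangent spaces. *)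

From HB Require Import structures.
From mathcomp Require Import all_boot all_order all_algebra.
From mathcomp Require Import all_classical all_reals.
From mathcomp Require Import topology normedtype derive.
Set Implicit Arguments. Unset Strict Implicit. Unset Printing Implicit Defensive.
Import Order.TTheory GRing.Theory Num.Theory.
Import numFieldNormedType.Exports.
Local Open Scope classical_set_scope.
Local Open Scope ring_scope.

Definition dom (R : realType) (n : nat) (U : set 'rV[R]_n) := {u : 'rV[R]_n | U u}.

Fixpoint Ck (R : realType) (m n : nat) (k : nat) (F : 'rV[R]_m -> 'rV[R]_n)
  (U : set 'rV[R]_m) {struct k} : Prop :=
  match k with
  | 0%N => forall x, U x -> {for x, continuous F}
  | k'.+1 => (forall x, U x -> differentiable F x) /\
             (forall v : 'rV[R]_m, Ck k' (fun x => 'd F x v) U)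
  end.

Definition smooth_on (R : realType) (m n : nat) (F : 'rV[R]_m -> 'rV[R]_n)
  (U : set 'rV[R]_m) : Prop := forall k, Ck k F U.

Definition plots (R : realType) (X : Type) :=
  forall (n : nat) (U : set 'rV[R]_n), (dom U -> X) -> Prop.

Definition precomp (R : realType) (X : Type) (m n : nat) (U : set 'rV[R]_n)
  (V : set 'rV[R]_m) (p : dom U -> X) (F : 'rV[R]_m -> 'rV[R]_n)
  (hF : forall v, V v -> U (F v)) : dom V -> X :=
  fun v => p (exist _ (F (sval v)) (hF _ (proj2_sig v))).

Definition is_diffeology (R : realType) (X : Type) (plot : plots R X) : Prop :=
  [/\
      (forall n (U : set 'rV[R]_n) p, plot n U p -> open U),
      (forall n (U : set 'rV[R]_n) (x : X), open U -> plot n U (fun _ => x)),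
      (forall m n (U : set 'rV[R]_n) (V : set 'rV[R]_m) (p : dom U -> X)
         (F : 'rV[R]_m -> 'rV[R]_n) (hF : forall v, V v -> U (F v)),
         open V -> plot n U p -> smooth_on F V -> plot m V (precomp p hF)) &
      (forall n (U : set 'rV[R]_n) (p : dom U -> X), open U ->
         (forall u : dom U, exists (W : set 'rV[R]_n) (hW : forall w, W w -> U (id w)),
              [/\ open W, W (sval u) & plot n W (precomp p hW)]) ->
         plot n U p)].

Definition prod_plots (R : realType) (X1 X2 : Type) (P1 : plots R X1) (P2 : plots R X2)
  : plots R (X1 * X2) :=
  fun n U p => P1 n U (fun u => (p u).1) /\ P2 n U (fun u => (p u).2).

(** Objects of the indexing category of the internal tangent space at x:
    plots p : U -> X with U a connected open neighbourhood of 0 and p(0) = x. *)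
Record pplot (R : realType) (X : Type) (plot : plots R X) (x : X) := PPlot {
  pn : nat;
  pU : set 'rV[R]_pn;
  pU_open : open pU;
  pU_conn : connected pU;
  pU0 : pU 0;
  pmap : dom pU -> X;
  pmap_plot : plot pn pU pmap;
  pmap0 : pmap (exist _ 0 pU0) = x }.

Arguments pn {R X plot x} p.
Arguments pU {R X plot x} p.
Arguments pU_open {R X plot x} p.
Arguments pU_conn {R X plot x} p.
Arguments pU0 {R X plot x} p.
Arguments pmap {R X plot x} p.
Arguments pmap_plot {R X plot x} p.
Arguments pmap0 {R X plot x} p.

(** Cocones over the functor p |-> T_0(U) = R^n, f |-> f_* = d f(0). *)
Definition tcocone (R : realType) (X : Type) (plot : plots R X) (x : X)
  (V : lmodType R) (iota : forall P : pplot plot x, 'rV[R]_(pn P) -> V) : Prop :=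
  (forall P, linear (iota P)) /\
  (forall (P Q : pplot plot x) (F : 'rV[R]_(pn P) -> 'rV[R]_(pn Q)),
     smooth_on F (pU P) ->
     (forall u, pU P u -> pU Q (F u)) ->
     F 0 = 0 ->
     (forall u (hu : pU P u) (hv : pU Q (F u)),
        pmap Q (exist _ (F u) hv) = pmap P (exist _ u hu)) ->
     forall v, iota Q ('d F 0 v) = iota P v).

(** (V, iota) is the internal tangent space T_x(X): a colimit in R-vector spaces. *)
Definition is_internal_tangent (R : realType) (X : Type) (plot : plots R X) (x : X)
  (V : lmodType R) (iota : forall P : pplot plot x, 'rV[R]_(pn P) -> V) : Prop :=
  tcocone iota /\
  forall (W : lmodType R) (kappa : forall P : pplot plot x, 'rV[R]_(pn P) -> W),
    tcocone kappa ->
    exists g : V -> W,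
      (linear g /\ forall P v, g (iota P v) = kappa P v) /\
      (forall g' : V -> W, linear g' -> (forall P v, g' (iota P v) = kappa P v) ->
         g' = g).

Definition pplot_fst (R : realType) (X1 X2 : Type) (P1 : plots R X1) (P2 : plots R X2)
  (x1 : X1) (x2 : X2) (P : pplot (prod_plots P1 P2) (x1, x2)) : pplot P1 x1 :=
  @PPlot R X1 P1 x1 (pn P) (pU P) (pU_open P) (pU_conn P) (pU0 P)
    (fun u => (pmap P u).1) (proj1 (pmap_plot P)) (f_equal fst (pmap0 P)).

Definition pplot_snd (R : realType) (X1 X2 : Type) (P1 : plots R X1) (P2 : plots R X2)
  (x1 : X1) (x2 : X2) (P : pplot (prod_plots P1 P2) (x1, x2)) : pplot P2 x2 :=
  @PPlot R X2 P2 x2 (pn P) (pU P) (pU_open P) (pU_conn P) (pU0 P)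
    (fun u => (pmap P u).2) (proj2 (pmap_plot P)) (f_equal snd (pmap0 P)).

(* The maps between the three tangent spaces all come from their universal
   properties.  Pairing the tangent maps of the two projections gives
   g : T -> T1 * T2, and the plots u |-> (p u, x2) and u |-> (x1, q u) give
   h1 : T1 -> T and h2 : T2 -> T; then h1 + h2 inverts g.  The one geometric
   input is that every generator of T splits: for a plot P of the product,
   on a ball B around 0 the plot (z1, z2) |-> (pr1 (P z1), pr2 (P z2)) of
   B x B receives P along the diagonal and the plots (pr1 P, x2), (x1, pr2 P)
   along the two axis inclusions, and the diagonal is the sum of these
   inclusions.  A constant plot contributes nothing, since it is also the
   target of the zero map. *)

From Pilot Require Import Defs.
From HB Require Import structures.
From mathcomp Require Import all_boot all_order all_algebra.
From mathcomp Require Import all_classical all_reals.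
From mathcomp Require Import topology normedtype derive.
Import Order.TTheory GRing.Theory Num.Theory.
Import numFieldNormedType.Exports.
Local Open Scope classical_set_scope.
Local Open Scope ring_scope.

Section Analysis.
Context {R : realType}.

Definition pack_linear {U V : lmodType R} {f : U -> V} (lf : linear f) :
  {linear U -> V} := HB.pack f (GRing.isLinear.Build R U V *:%R f lf).

Lemma Ck_cst {m n} k (c : 'rV[R]_n) (U : set 'rV[R]_m) : Ck k (cst c) U.
Proof.
elim: k c => [|k IHk] c /=; first by move=> x _; apply: cst_continuous.
split=> [x _|v]; first exact: differentiable_cst.
have -> : (fun x => 'd (cst c) x v) = cst 0 by apply: funext => x; rewrite diff_cst.
exact: IHk.
Qed.

Lemma smooth_on_linear {m n} (f : {linear 'rV[R]_m -> 'rV[R]_n}) (U : set 'rV[R]_m) :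
  continuous f -> smooth_on f U.
Proof.
move=> cf [|k] /=; first by move=> x _; apply: cf.
split=> [x _|v]; first exact: linear_differentiable.
have -> : (fun x => 'd f x v) = cst (f v) by apply: funext => x; rewrite diff_lin.
exact: Ck_cst.
Qed.

Lemma ball_row_mx {m n1 n2} {a u : 'M[R]_(m, n1)} {b w : 'M[R]_(m, n2)} {r} :
  ball a r u -> ball b r w -> ball (row_mx a b) r (row_mx u w).
Proof.
move=> [r0 au] [_ bw]; split=> // i j.
by case: (split_ordP j) => k ->; rewrite !(row_mxEl, row_mxEr).
Qed.

Lemma ball0_row_mx {m n1 n2} {u : 'M[R]_(m, n1)} {w : 'M[R]_(m, n2)} {r} :
  ball 0 r u -> ball 0 r w -> ball 0 r (row_mx u w).
Proof. by move=> /ball_row_mx/[apply]; rewrite row_mx0. Qed.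

Lemma ball_lsubmx {m n1 n2} {c z : 'M[R]_(m, n1 + n2)} {r} :
  ball c r z -> ball (lsubmx c) r (lsubmx z).
Proof. by move=> [r0 cz]; split=> // i j; rewrite !mxE. Qed.

Lemma ball_rsubmx {m n1 n2} {c z : 'M[R]_(m, n1 + n2)} {r} :
  ball c r z -> ball (rsubmx c) r (rsubmx z).
Proof. by move=> [r0 cz]; split=> // i j; rewrite !mxE. Qed.

Lemma continuous_row_mx {T : topologicalType} {m n1 n2}
    {f : T -> 'M[R]_(m, n1)} {g : T -> 'M[R]_(m, n2)} :
  continuous f -> continuous g -> continuous (fun t => row_mx (f t) (g t)).
Proof.
move=> cf cg t A /nbhs_ballP[e /= e0 eA].
have fe := cf t _ (nbhsx_ballx (f t) _ e0).
have ge := cg t _ (nbhsx_ballx (g t) _ e0).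
rewrite !nbhs_simpl /= in fe ge *.
apply: filterS2 fe ge => s fs gs; exact/eA/ball_row_mx.
Qed.

Lemma ball_connected {V : normedModType R} (c : V) r : connected (ball c r).
Proof.
have -> : ball c r =
    \bigcup_(y in ball c r) ((fun t : R => c + t *: (y - c)) @` `[0, 1]).
  apply/seteqP; split=> [y cy|_ [y cy [t t01 <-]]].
    exists y => //; exists 1; last by rewrite scale1r addrC subrK.
    by rewrite /= in_itv /= ler01 lexx.
  move: cy t01; rewrite -!ball_normE /ball_ /= in_itv /= => cy /andP[t0 t1].
  rewrite opprD addrA subrr sub0r normrN normrZ ger0_norm //.
  apply: le_lt_trans cy; rewrite -normrN opprB.
  by rewrite -[leRHS]mul1r ler_wpM2r.
apply: bigcup_connected.
  exists c => y cy; exists 0; last by rewrite scale0r addr0.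
  by rewrite /= in_itv /= lexx ler01.
move=> y _; apply: connected_continuous_connected; first exact: segment_connected.
apply: continuous_subspaceT => t.
have Zc : {for t, continuous (fun s : R => s *: (y - c))} by apply: continuousZr_tmp.
by apply: (cvgD _ Zc); apply: cvg_cst.
Qed.

End Analysis.

Section PointedPlots.
Context {R : realType} {X : Type} {plot : plots R X} {x : X}.
Implicit Types P Q : pplot plot x.

Lemma pmap_exist_eq {P u w} (hu : pU P u) (hw : pU P w) :
  u = w -> Defs.pmap P (exist _ u hu) = Defs.pmap P (exist _ w hw).
Proof. by move=> uw; subst w; rewrite (Prop_irrelevance hu hw). Qed.

Lemma pmap_exist0 {P u} (hu : pU P u) : u = 0 -> Defs.pmap P (exist _ u hu) = x.
Proof. by move=> u0; rewrite (pmap_exist_eq hu (pU0 P) u0) pmap0. Qed.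

Section Cocone.
Context {V : lmodType R} {iota : forall P : pplot plot x, 'rV[R]_(pn P) -> V}.
Hypothesis iotaC : tcocone iota.

Lemma tcocone_linear {P Q} (F : 'rV[R]_(pn P) -> 'rV[R]_(pn Q)) :
  linear F -> continuous F -> (forall u, pU P u -> pU Q (F u)) ->
  (forall u hu hv, Defs.pmap Q (exist _ (F u) hv) = Defs.pmap P (exist _ u hu)) ->
  forall v, iota Q (F v) = iota P v.
Proof.
move=> lF cF FPQ Fmap v; have [_ iota_mor] := iotaC.
have := iota_mor P Q F (smooth_on_linear (pack_linear lF) _ cF) FPQ
  (linear0 (pack_linear lF)) Fmap v.
by rewrite (@diff_lin _ _ _ (pack_linear lF)).
Qed.

Lemma tcocone_const P : (forall u, Defs.pmap P u = x) -> forall v, iota P v = 0.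
Proof.
move=> Px v; have [iota_lin iota_mor] := iotaC.
have := iota_mor P P (cst 0) (fun k => Ck_cst k 0 _) (fun _ _ => pU0 P)
  erefl (fun u hu hv => etrans (Px _) (esym (Px _))) v.
by rewrite diff_cst => <-; exact: (linear0 (pack_linear (iota_lin P))).
Qed.

End Cocone.

Section Ball.
Context (plotD : is_diffeology plot) {P : pplot plot x} {r : R}.
Context (r0 : 0 < r) (rP : ball (0 : 'rV[R]_(pn P)) r `<=` pU P).

Definition pplot_ball : pplot plot x.
refine (@PPlot R X plot x (pn P) (ball 0 r) (ball_open 0 r) (ball_connected 0 r)
  (ballxx 0 r0) (@precomp _ _ _ _ _ _ (Defs.pmap P) idfun rP) _
  (pmap_exist0 _ erefl)).
have [_ _ plot_comp _] := plotD.
apply: (plot_comp _ _ _ _ _ idfun rP (ball_open 0 r) (pmap_plot P)).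
by apply: smooth_on_linear => u; exact: cvg_id.
Defined.

Lemma tcocone_ball {V : lmodType R} {iota : forall P : pplot plot x, 'rV[R]_(pn P) -> V} :
  tcocone iota -> forall v, iota pplot_ball v = iota P v.
Proof.
move=> iotaC v.
have := tcocone_linear iotaC (P := pplot_ball) (Q := P) (fun u => u).
move=> /(_ (fun _ _ _ => erefl) (fun _ => cvg_id) rP) -> //.
by move=> u hu hv; apply: pmap_exist_eq.
Qed.

End Ball.

Section InternalTangent.
Context {V : lmodType R} {iota : forall P : pplot plot x, 'rV[R]_(pn P) -> V}.
Hypothesis iotaT : is_internal_tangent iota.

Lemma tangent_lift {W : lmodType R}
    {kappa : forall P : pplot plot x, 'rV[R]_(pn P) -> W} :
  tcocone kappa -> exists g : {linear V -> W}, forall P v, g (iota P v) = kappa P v.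
Proof.
move=> kappaC; have [_ /(_ W kappa kappaC)[g [[lg g_iota] _]]] := iotaT.
by exists (pack_linear lg).
Qed.

Lemma tangent_ext {W : lmodType R} {f f' : V -> W} : linear f -> linear f' ->
  (forall P v, f (iota P v) = f' (iota P v)) -> f =1 f'.
Proof.
move=> lf lf' ff'; have [[iota_lin iota_mor] univ] := iotaT.
pose kappa P v := f (iota P v).
have kappaC : tcocone kappa.
  split=> [P a u v|P Q F sF FPQ F0 Fmap v]; first by rewrite /kappa iota_lin lf.
  by rewrite /kappa (iota_mor P Q F).
have [g [_ g_uniq]] := univ W kappa kappaC.
rewrite (g_uniq f lf) // (g_uniq f' lf') // => P v.
by rewrite -ff'.
Qed.

End InternalTangent.

End PointedPlots.

Section Product.
Context {R : realType} {X1 X2 : Type} {P1 : plots R X1} {P2 : plots R X2}.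
Hypotheses (D1 : is_diffeology P1) (D2 : is_diffeology P2).

Lemma is_diffeology_prod : is_diffeology (prod_plots P1 P2).
Proof.
have [open1 cst1 comp1 loc1] := D1; have [open2 cst2 comp2 loc2] := D2.
split=> [n U p [p1 _]|n U y oU|m n U V p F hF oV [p1 p2] sF|n U p oU p_loc].
- exact: open1 p1.
- by split; [exact: cst1 | exact: cst2].
- by split; [exact: comp1 p1 sF | exact: comp2 p2 sF].
split; [apply: loc1 => // u | apply: loc2 => // u];
  have [W [hW [oW Wu [W1 W2]]]] := p_loc u; by exists W, hW.
Qed.

Context {x1 : X1} {x2 : X2}.
Local Notation PP := (prod_plots P1 P2).

Definition pplot_inl (Q : pplot P1 x1) : pplot PP (x1, x2).
refine (@PPlot R _ PP (x1, x2) (pn Q) (pU Q) (pU_open Q) (pU_conn Q) (pU0 Q)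
  (fun u => (Defs.pmap Q u, x2)) _ _); last by rewrite pmap0.
have [_ cst2 _ _] := D2.
by split; [exact: pmap_plot | exact: cst2 _ _ _ (pU_open Q)].
Defined.

Definition pplot_inr (Q : pplot P2 x2) : pplot PP (x1, x2).
refine (@PPlot R _ PP (x1, x2) (pn Q) (pU Q) (pU_open Q) (pU_conn Q) (pU0 Q)
  (fun u => (x1, Defs.pmap Q u)) _ _); last by rewrite pmap0.
have [_ cst1 _ _] := D1.
by split; [exact: cst1 _ _ _ (pU_open Q) | exact: pmap_plot].
Defined.

Lemma tcocone_pair {V1 V2 : lmodType R}
    {k1 : forall P : pplot P1 x1, 'rV[R]_(pn P) -> V1}
    {k2 : forall P : pplot P2 x2, 'rV[R]_(pn P) -> V2} :
  tcocone k1 -> tcocone k2 ->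
  tcocone (fun P : pplot PP (x1, x2) => fun v =>
    (k1 (pplot_fst P) v, k2 (pplot_snd P) v)).
Proof.
move=> [lin1 mor1] [lin2 mor2]; split=> [P a u v|P Q F sF FPQ F0 Fmap v].
  by rewrite (lin1 (pplot_fst P)) (lin2 (pplot_snd P)).
congr pair; [apply: (mor1 (pplot_fst P) (pplot_fst Q)) |
             apply: (mor2 (pplot_snd P) (pplot_snd Q))] => // u hu hv /=;
  by rewrite Fmap.
Qed.

Section Cocone.
Context {V : lmodType R} {iota : forall P : pplot PP (x1, x2), 'rV[R]_(pn P) -> V}.
Hypothesis iotaC : tcocone iota.

Lemma tcocone_inl : tcocone (fun Q : pplot P1 x1 => iota (pplot_inl Q)).
Proof.
have [iota_lin iota_mor] := iotaC; split=> [Q|P Q F sF FPQ F0 Fmap v].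
  exact: iota_lin (pplot_inl Q).
by apply: (iota_mor (pplot_inl P) (pplot_inl Q)) => // u hu hv /=; rewrite Fmap.
Qed.

Lemma tcocone_inr : tcocone (fun Q : pplot P2 x2 => iota (pplot_inr Q)).
Proof.
have [iota_lin iota_mor] := iotaC; split=> [Q|P Q F sF FPQ F0 Fmap v].
  exact: iota_lin (pplot_inr Q).
by apply: (iota_mor (pplot_inr P) (pplot_inr Q)) => // u hu hv /=; rewrite Fmap.
Qed.

Section Split.
Context {P : pplot PP (x1, x2)} {r : R}.
Context (r0 : 0 < r) (rP : ball (0 : 'rV[R]_(pn P)) r `<=` pU P).
Local Notation n := (pn P).

Lemma lsubmx_ball_dom (z : 'rV[R]_(n + n)) : ball 0 r z -> pU P (lsubmx z).
Proof. by move=> /ball_lsubmx; rewrite linear0; exact: rP. Qed.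

Lemma rsubmx_ball_dom (z : 'rV[R]_(n + n)) : ball 0 r z -> pU P (rsubmx z).
Proof. by move=> /ball_rsubmx; rewrite linear0; exact: rP. Qed.

Definition pplot_split : pplot PP (x1, x2).
refine (@PPlot R _ PP (x1, x2) (n + n) (ball 0 r) (ball_open 0 r)
  (ball_connected 0 r) (ballxx 0 r0)
  (fun z => (@precomp _ _ _ _ _ _ (fun u => (Defs.pmap P u).1) lsubmx
               lsubmx_ball_dom z,
             @precomp _ _ _ _ _ _ (fun u => (Defs.pmap P u).2) rsubmx
               rsubmx_ball_dom z)) _ _).
- have [[_ _ comp1 _] [_ _ comp2 _]] := (D1, D2).
  have [plot1 plot2] := pmap_plot P.
  split; [apply: (comp1 _ _ _ _ _ _ _ (ball_open 0 r) plot1) |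
          apply: (comp2 _ _ _ _ _ _ _ (ball_open 0 r) plot2)];
    apply: smooth_on_linear.
    exact: continuous_lsubmx.
  exact: continuous_rsubmx.
- by rewrite /precomp /= !pmap_exist0 ?linear0.
Defined.

Let DP := is_diffeology_prod.

Lemma tcocone_split_diag v : iota pplot_split (row_mx v v) = iota P v.
Proof.
rewrite -(tcocone_ball DP r0 rP iotaC).
apply: (tcocone_linear iotaC (P := pplot_ball DP r0 rP) (Q := pplot_split)
  (fun u => row_mx u u)).
- by move=> a u w; rewrite scale_row_mx add_row_mx.
- by apply: (@continuous_row_mx _ _ _ _ _ id id) => ?; exact: cvg_id.
- by move=> u hu; exact: (ball0_row_mx hu hu).
move=> u hu hv; rewrite /= /precomp.
rewrite (pmap_exist_eq _ (rP u hu) (row_mxKl u u)).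
rewrite (pmap_exist_eq _ (rP u hu) (row_mxKr u u)).
by case: (Defs.pmap P _).
Qed.

Lemma tcocone_split_inl v :
  iota pplot_split (row_mx v 0) = iota (pplot_inl (pplot_fst P)) v.
Proof.
rewrite -(tcocone_ball DP (P := pplot_inl (pplot_fst P)) r0 rP iotaC).
apply: (tcocone_linear iotaC (Q := pplot_split) (fun u => row_mx u 0)
  (P := pplot_ball DP (P := pplot_inl (pplot_fst P)) r0 rP)).
- by move=> a u w; rewrite scale_row_mx add_row_mx scaler0 addr0.
- apply: (@continuous_row_mx _ _ _ _ _ id (cst 0)); last exact: cst_continuous.
  by move=> ?; exact: cvg_id.
- by move=> u hu; exact: (ball0_row_mx hu (ballxx 0 r0)).
move=> u hu hv; rewrite /= /precomp.
by rewrite (pmap_exist_eq _ (rP u hu) (row_mxKl u 0)) (pmap_exist0 _ (row_mxKr u 0)).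
Qed.

Lemma tcocone_split_inr v :
  iota pplot_split (row_mx 0 v) = iota (pplot_inr (pplot_snd P)) v.
Proof.
rewrite -(tcocone_ball DP (P := pplot_inr (pplot_snd P)) r0 rP iotaC).
apply: (tcocone_linear iotaC (Q := pplot_split) (fun u => row_mx 0 u)
  (P := pplot_ball DP (P := pplot_inr (pplot_snd P)) r0 rP)).
- by move=> a u w; rewrite scale_row_mx add_row_mx scaler0 addr0.
- apply: (@continuous_row_mx _ _ _ _ _ (cst 0) id); first exact: cst_continuous.
  by move=> ?; exact: cvg_id.
- by move=> u hu; exact: (ball0_row_mx (ballxx 0 r0) hu).
move=> u hu hv; rewrite /= /precomp.
by rewrite (pmap_exist_eq _ (rP u hu) (row_mxKr 0 u)) (pmap_exist0 _ (row_mxKl 0 u)).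
Qed.

End Split.

Lemma tcocone_split P v :
  iota P v = iota (pplot_inl (pplot_fst P)) v + iota (pplot_inr (pplot_snd P)) v.
Proof.
have /nbhs_ballP[r /= r0 rP] : nbhs (0 : 'rV[R]_(pn P)) (pU P).
  by apply: open_nbhs_nbhs; split; [exact: pU_open | exact: pU0].
have [iota_lin _] := iotaC.
rewrite -(tcocone_split_diag r0 rP) -(tcocone_split_inl r0 rP).
rewrite -(tcocone_split_inr r0 rP) -(linearD (pack_linear (iota_lin _))) /=.
by rewrite add_row_mx addr0 add0r.
Qed.

End Cocone.

Section FactorCocones.
Context {V1 V2 : lmodType R}.
Context {k1 : forall P : pplot P1 x1, 'rV[R]_(pn P) -> V1}.
Context {k2 : forall P : pplot P2 x2, 'rV[R]_(pn P) -> V2}.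
Hypotheses (k1C : tcocone k1) (k2C : tcocone k2).

Lemma tcocone_fst_inl Q v : k1 (pplot_fst (pplot_inl Q)) v = k1 Q v.
Proof.
have := tcocone_linear k1C (P := pplot_fst (pplot_inl Q)) (Q := Q) (fun u => u).
move=> /(_ (fun _ _ _ => erefl) (fun _ => cvg_id) (fun _ => id)) -> //.
by move=> u hu hv; apply: pmap_exist_eq.
Qed.

Lemma tcocone_snd_inr Q v : k2 (pplot_snd (pplot_inr Q)) v = k2 Q v.
Proof.
have := tcocone_linear k2C (P := pplot_snd (pplot_inr Q)) (Q := Q) (fun u => u).
move=> /(_ (fun _ _ _ => erefl) (fun _ => cvg_id) (fun _ => id)) -> //.
by move=> u hu hv; apply: pmap_exist_eq.
Qed.

Lemma tcocone_snd_inl (Q : pplot P1 x1) v : k2 (pplot_snd (pplot_inl Q)) v = 0.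
Proof. exact: tcocone_const. Qed.

Lemma tcocone_fst_inr (Q : pplot P2 x2) v : k1 (pplot_fst (pplot_inr Q)) v = 0.
Proof. exact: tcocone_const. Qed.

End FactorCocones.

End Product.

Theorem proposition3p7 (R : realType) (X1 X2 : Type)
  (P1 : plots R X1) (P2 : plots R X2)
  (D1 : is_diffeology P1) (D2 : is_diffeology P2) (x1 : X1) (x2 : X2)
  (T1 : lmodType R) (i1 : forall P : pplot P1 x1, 'rV[R]_(pn P) -> T1)
  (H1 : is_internal_tangent i1)
  (T2 : lmodType R) (i2 : forall P : pplot P2 x2, 'rV[R]_(pn P) -> T2)
  (H2 : is_internal_tangent i2)
  (T : lmodType R)
  (i : forall P : pplot (prod_plots P1 P2) (x1, x2), 'rV[R]_(pn P) -> T)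
  (H : is_internal_tangent i) :
  exists g : T -> (T1 * T2)%type,
    [/\ linear g, bijective g &
        forall (P : pplot (prod_plots P1 P2) (x1, x2)) (v : 'rV[R]_(pn P)),
          g (i P v) = (i1 (pplot_fst P) v, i2 (pplot_snd P) v)].
Proof.
have [iC _] := H; have [i1C _] := H1; have [i2C _] := H2.
have [g g_i] := tangent_lift H (tcocone_pair i1C i2C).
have [h1 h1_i] := tangent_lift H1 (tcocone_inl D2 iC).
have [h2 h2_i] := tangent_lift H2 (tcocone_inr D1 iC).
have g_h1 : forall a, g (h1 a) = (a, 0).
  apply: (tangent_ext H1 (f := fun a => g (h1 a)) (f' := fun a => (a, 0)))
    => [a u w|a u w|Q v] /=; rewrite ?linearP //.
    by rewrite -[RHS]/(_, a *: 0 + 0) scaler0 addr0.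
  by rewrite h1_i g_i tcocone_fst_inl // tcocone_snd_inl.
have g_h2 : forall b, g (h2 b) = (0, b).
  apply: (tangent_ext H2 (f := fun b => g (h2 b)) (f' := fun b => (0, b)))
    => [a u w|a u w|Q v] /=; rewrite ?linearP //.
    by rewrite -[RHS]/(a *: 0 + 0, _) scaler0 addr0.
  by rewrite h2_i g_i tcocone_fst_inr // tcocone_snd_inr.
exists g; split=> //; first exact: linearP.
exists (fun ab => h1 ab.1 + h2 ab.2).
- apply: (tangent_ext H (f := fun t => h1 (g t).1 + h2 (g t).2) (f' := id))
    => [a u w|a u w|P v] //=.
    by rewrite linearP /= !linearP scalerDr addrACA.
  by rewrite g_i h1_i h2_i -tcocone_split.
- by case=> a b; rewrite /= linearD g_h1 g_h2 -[LHS]/(a + 0, 0 + b) addr0 add0r.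
Qed.
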